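(* A quasitopological group $G$ with identity $e$ is dense-connected if and only if $UV=G$ for all open neighborhoods $U$ and $V$ of $e$.
   Context: A quasitopological group is a group with a topology for which multiplication is separately continuous (each left and right translation is continuous) and inversion $x\mapsto x^{-1}$ is continuous; no separation axioms assumed. A space is dense-connected if every dense subset of it (with the subspace topology) is connected. *)

From mathcomp Require Import all_boot all_order all_algebra.
From mathcomp Require Import all_classical all_reals all_analysis.
Set Implicit Arguments. Unset Strict Implicit. Unset Printing Implicit Defensive.
Local Open Scope classical_set_scope.

Definition is_group (G : Type) (mul : G -> G -> G) (inv : G -> G) (e : G) : Prop :=
  (forall x y z, mul x (mul y z) = mul (mul x y) z) /\
  (forall x, mul e x = x) /\ (forall x, mul x e = x) /\
  (forall x, mul (inv x) x = e) /\ (forall x, mul x (inv x) = e).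

Definition quasitopological_group (G : topologicalType)
    (mul : G -> G -> G) (inv : G -> G) (e : G) : Prop :=
  is_group mul inv e /\
  (forall a, continuous (mul a)) /\
  (forall a, continuous (fun x => mul x a)) /\
  continuous inv.

(* Every dense subset is connected in the subspace topology
   (mathcomp-analysis' [connected A] is connectedness of A as a subspace). *)
Definition dense_connected (G : topologicalType) : Prop :=
  forall S : set G, dense S -> connected S.

Definition setmul (G : Type) (mul : G -> G -> G) (U V : set G) : set G :=
  [set z | exists2 u, U u & exists2 v, V v & z = mul u v].

From mathcomp Require Import all_boot all_order all_algebra.
From mathcomp Require Import all_classical all_reals all_analysis.
Set Implicit Arguments. Unset Strict Implicit. Unset Printing Implicit Defensive.
Local Open Scope classical_set_scope.

(* Both conditions of the theorem are equivalent to hyperconnectedness of G: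
   any two nonempty open sets meet.

   Purely topological half (any space T):
   - a hyperconnected space is dense-connected: if B is a nonempty relatively
     clopen subset of a dense S, B = S `&` C = S `&` D (C open, D closed), then
     C and ~` D cannot be disjoint nonempty open sets, so S misses ~` D;
   - a dense-connected space is hyperconnected: if C, W are disjoint nonempty
     open sets, C is a nonempty proper clopen part of the dense set
     C `|` ~` closure C, which therefore is not connected.
   Group half (quasitopological group G):
   - if G is hyperconnected then U V = G: for g in G, the open sets U and
     g V^-1 (which contains g) meet in some x = g v^-1, so g = x v;
   - if U V = G for all neighbourhoods of e then G is hyperconnected: for
     a in C and b in W, write a^-1 b = u v with a u in C, b v^-1 in W;
     then a u = b v^-1 lies in C `&` W. *)

Definition hyperconnected (T : topologicalType) : Prop :=
  forall C W : set T, open C -> open W -> C !=set0 -> W !=set0 -> C `&` W !=set0.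

Lemma dense_setU_closureC (T : topologicalType) (A : set T) :
  dense (A `|` ~` closure A).
Proof.
move=> O [y Oy] oO.
have [[z [Oz Az]]|nOA] := pselect (O `&` A !=set0).
  by exists z; split => //; left.
exists y; split => //; right => Ay.
have [z [Az Oz]] := Ay O (open_nbhs_nbhs (conj oO Oy)).
by apply: nOA; exists z.
Qed.

(* In a hyperconnected space a nonempty relatively clopen part B of a dense
   set S is all of S: a point of S outside B would make two nonempty open
   sets disjoint from each other modulo S. *)
Lemma hyperconnected_dense_connected (T : topologicalType) :
  hyperconnected T -> dense_connected T.
Proof.
move=> hT S dS B [a Ba] [C oC BSC] [D cD BSD].
apply/seteqP; split; first by rewrite BSC; apply: subIsetl.
move=> b Sb; apply: contrapT => nBb.
have nDb : ~ D b by move=> Db; apply: nBb; rewrite BSD.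
have [_ Ca] : (S `&` C) a by rewrite -BSC.
have oCD : open (C `&` ~` D) by apply: openI oC (closed_openC cD).
have [s [[Cs nDs] Ss]] : (C `&` ~` D) `&` S !=set0.
  by apply: dS oCD; apply: hT => //; [exact: closed_openC|exists a|exists b].
have : B s by rewrite BSC.
by rewrite BSD => -[].
Qed.

(* Two disjoint nonempty open sets C, W would disconnect the dense set
   C `|` ~` closure C, in which C is clopen and which contains W. *)
Lemma dense_connected_hyperconnected (T : topologicalType) :
  dense_connected T -> hyperconnected T.
Proof.
move=> dcT C W oC oW C0 [w Ww]; apply: contrapT => CW0.
pose S := C `|` ~` closure C.
have C_open_in_S : exists2 O, open O & C = S `&` O.
  by exists C => //; apply/seteqP; split => [x Cx|x []//]; split => //; left.
have C_closed_in_S : exists2 F, closed F & C = S `&` F.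
  exists (closure C); first exact: closed_closure.
  apply/seteqP; split => [x Cx|x [[//|nclCx] /nclCx//]].
  by split; [left | apply: subset_closure].
have CS := dcT S (dense_setU_closureC C) C C0 C_open_in_S C_closed_in_S.
have nclCw : ~ closure C w.
  move=> clCw; have [x [Cx Wx]] := clCw W (open_nbhs_nbhs (conj oW Ww)).
  by apply: CW0; exists x.
have : S w by right.
by rewrite -CS => Cw; apply: CW0; exists w.
Qed.

Section QuasitopologicalGroup.
Variables (G : topologicalType) (mul : G -> G -> G) (inv : G -> G) (e : G).
Hypothesis qG : quasitopological_group mul inv e.

Let mulA : forall x y z, mul x (mul y z) = mul (mul x y) z.
Proof. by case: qG => -[]. Qed.
Let mul1g : forall x, mul e x = x.
Proof. by case: qG => -[_ []]. Qed.
Let mulg1 : forall x, mul x e = x.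
Proof. by case: qG => -[_ [_ []]]. Qed.
Let mulVg : forall x, mul (inv x) x = e.
Proof. by case: qG => -[_ [_ [_ [mulVg _]]]]. Qed.
Let mulgV : forall x, mul x (inv x) = e.
Proof. by case: qG => -[_ [_ [_ [_ mulgV]]]]. Qed.

Lemma inv1 : inv e = e.
Proof. by rewrite -[inv e]mulg1 mulVg. Qed.

Lemma open_lmul (a : G) (O : set G) : open O -> open (mul a @^-1` O).
Proof. by case: qG => _ [cl _]; move/continuousP: (cl a); apply. Qed.

Lemma open_lmul_inv (a : G) (O : set G) :
  open O -> open ((fun x => mul a (inv x)) @^-1` O).
Proof.
case: qG => _ [cl [_ ci]].
have cf : continuous (fun x => mul a (inv x)).
  by move=> x; exact: continuous_comp (ci x) (cl a (inv x)).
by move/continuousP: cf; apply.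
Qed.

Lemma open_rmul_inv (a : G) (O : set G) :
  open O -> open ((fun x => mul (inv x) a) @^-1` O).
Proof.
case: qG => _ [_ [cr ci]].
have cf : continuous (fun x => mul (inv x) a).
  by move=> x; exact: continuous_comp (ci x) (cr a (inv x)).
by move/continuousP: cf; apply.
Qed.

(* If G is hyperconnected, every g lies in U V: the open sets U and g V^-1
   (the preimage of V under x |-> x^-1 g, containing g) meet. *)
Lemma hyperconnected_setmulT : hyperconnected G ->
  forall U V : set G, open U -> U e -> open V -> V e -> setmul mul U V = setT.
Proof.
move=> hG U V oU Ue oV Ve; apply/seteqP; split => // g _.
have gVinv : ((fun x => mul (inv x) g) @^-1` V) g by rewrite /= mulVg.
have [x [Ux Vx]] := hG U _ oU (open_rmul_inv g oV) (ex_intro _ e Ue)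
  (ex_intro _ g gVinv).
by exists x => //; exists (mul (inv x) g) => //; rewrite mulA mulgV mul1g.
Qed.

(* If U V = G for all neighbourhoods U, V of e, then for a in C and b in W
   the factorization a^-1 b = u v with a u in C and b v^-1 in W yields the
   common point a u = b v^-1 of C and W. *)
Lemma setmulT_hyperconnected :
  (forall U V : set G, open U -> U e -> open V -> V e -> setmul mul U V = setT) ->
  hyperconnected G.
Proof.
move=> UVT C W oC oW [a Ca] [b Wb].
pose U := mul a @^-1` C; pose V := (fun v => mul b (inv v)) @^-1` W.
have Ue : U e by rewrite /U /= mulg1.
have Ve : V e by rewrite /V /= inv1 mulg1.
have : setmul mul U V (mul (inv a) b).
  by rewrite UVT //; [exact: open_lmul | exact: open_lmul_inv].
move=> [u Uu [v Vv abE]]; exists (mul a u); split => //.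
have -> : mul a u = mul b (inv v).
  by rewrite -[mul a u]mulg1 -(mulgV v) mulA -(mulA a) -abE mulA mulgV mul1g.
exact: Vv.
Qed.

End QuasitopologicalGroup.

Theorem theorem4p10 (G : topologicalType) (mul : G -> G -> G) (inv : G -> G) (e : G) :
  quasitopological_group mul inv e ->
  (dense_connected G <->
   forall U V : set G, open U -> U e -> open V -> V e -> setmul mul U V = setT).
Proof.
move=> qG; split => [dcG | UVT].
- by apply: hyperconnected_setmulT qG _; apply: dense_connected_hyperconnected.
- by apply: hyperconnected_dense_connected; apply: setmulT_hyperconnected qG _.
Qed.
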